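(* For every $\alpha>1$, the spherical scoring rule with parameter $\alpha$ on the forecast domain $\mathcal{D}=\Delta^n$, i.e. the scoring rule given by $G(\mathbf{p})=\big(\sum_{i=1}^n p_i^{\alpha}\big)^{1/\alpha}$, has convex exposure.
   Context: $\Delta^n$ is the standard simplex in $\mathbb{R}^n$. The scoring rule given by a differentiable strictly convex $G$ is $s(\mathbf{p};j)=G(\mathbf{p})+\langle\nabla G(\mathbf{p}),\delta_j-\mathbf{p}\rangle$ ($\delta_j$ the $j$-th standard basis vector). Its exposure function is $\mathbf{g}=\nabla G$, with values understood modulo translation by the all-ones vector (equivalently projected onto $\{\mathbf{x}:\sum_i x_i=0\}$). Convex exposure means the range of $\mathbf{g}$ is a convex set. *)

From mathcomp Require Import all_boot all_order all_algebra.
From mathcomp Require Import all_classical all_reals all_analysis.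
Import Order.TTheory GRing.Theory Num.Theory numFieldNormedType.Exports.

Set Implicit Arguments.
Unset Strict Implicit.
Unset Printing Implicit Defensive.

Local Open Scope ring_scope.
Local Open Scope classical_set_scope.

Definition simplex (R : realType) (n : nat) : set 'rV[R]_n :=
  [set p | (forall i, 0 <= p ord0 i) /\ \sum_(i < n) p ord0 i = 1].

(* It is defined on all of R^n via |p_i| (this agrees with the paper's G on
   the simplex and makes it differentiable in a neighbourhood of it). *)
Definition spherical_G (R : realType) (n : nat) (alpha : R)
    (p : 'rV[R]_n) : R :=
  (\sum_(i < n) `|p ord0 i| `^ alpha) `^ alpha^-1.

Definition gradient (R : realType) (n : nat) (G : 'rV[R]_n -> R)
    (p : 'rV[R]_n) : 'rV[R]_n :=
  \row_(i < n) ('D_(delta_mx ord0 i) G p).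

(* Orthogonal projection onto the hyperplane {x | sum_i x_i = 0}, i.e. the
   canonical representative modulo translation by the all-ones vector. *)
Definition proj_sum0 (R : realType) (n : nat) (x : 'rV[R]_n) : 'rV[R]_n :=
  x - ((\sum_(i < n) x ord0 i) / n%:R) *: const_mx 1.

Definition score (R : realType) (n : nat) (G : 'rV[R]_n -> R)
    (p : 'rV[R]_n) (j : 'I_n) : R :=
  G p + \sum_(i < n) gradient G p ord0 i * (delta_mx ord0 j - p) ord0 i.

(* Range of the exposure function g = grad G on the forecast domain Delta^n,
   taken modulo the all-ones vector (projected onto the sum-zero hyperplane). *)
Definition exposure_range (R : realType) (n : nat) (G : 'rV[R]_n -> R)
    : set 'rV[R]_n :=
  [set proj_sum0 (gradient G p) | p in @simplex R n].

Definition convex_exposure (R : realType) (n : nat) (G : 'rV[R]_n -> R) :=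
  convex_set (exposure_range G).

(* On the simplex, the gradient of G(p) = (sum_i p_i^alpha)^(1/alpha) is the vector
   (p_i^(alpha-1))_i divided by G(p)^(alpha-1).  These vectors are exactly the
   nonnegative points of the unit sphere of the dual norm, of exponent
   q = alpha/(alpha-1).  A convex combination of two such points lies in the
   nonnegative unit ball (convexity of x |-> x^q), and by the intermediate value
   theorem a nonnegative multiple of the all-ones vector moves it back onto the
   sphere; this shift is invisible modulo the all-ones vector. *)

From mathcomp Require Import all_boot all_order all_algebra.
From mathcomp Require Import all_classical all_reals all_analysis.
From mathcomp Require Import ring lra.
Import Order.TTheory GRing.Theory Num.Theory numFieldNormedType.Exports.

Set Implicit Arguments.
Unset Strict Implicit.
Unset Printing Implicit Defensive.

Local Open Scope ring_scope.
Local Open Scope classical_set_scope.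

Lemma sumr_gt0_of_support (R : numDomainType) (I : finType) (F G : I -> R) :
  (forall i, 0 <= G i) -> (forall i, G i = 0 -> F i = 0) ->
  \sum_i F i != 0 -> 0 < \sum_i G i.
Proof.
move=> G_ge0 GF F_neq0; rewrite lt_neqAle sumr_ge0 // andbT eq_sym.
apply: contra F_neq0 => /eqP /(psumr_eq0P (fun i _ => G_ge0 i)) G0.
by apply/eqP/big1 => i _; apply/GF/G0.
Qed.

Section DirectionalDerivatives.
Variable R : realType.

Lemma derive_along_line (V W : normedModType R) (f : V -> W) (a v : V) :
  'D_v f a = 'D_1 (fun h : R => f (h *: v + a)) 0.
Proof.
rewrite /derive /comp /shift scale0r add0r.
by under [in RHS]eq_fun do rewrite addr0 [_%:A]mulr1.
Qed.

Lemma cvg_quotient_is_derive (W : normedModType R) (f : R -> W) (a : R) (l : W) :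
  (fun h => h^-1 *: (f (h + a) - f a)) @ 0^' --> l -> is_derive a 1 f l.
Proof.
have E : (fun h : R => h^-1 *: ((f \o shift a) (h *: 1) - f a)) =
         (fun h => h^-1 *: (f (h + a) - f a)).
  by apply/funext => h /=; rewrite /shift [h *: 1]mulr1.
move=> fl; split; first by rewrite /derivable E; apply/cvg_ex; exists l.
by rewrite /derive E; exact: cvg_lim.
Qed.

Lemma is_derive1_comp (f g : R -> R) (x df dg : R) :
  is_derive x 1 f df -> is_derive (f x) 1 g dg ->
  is_derive x 1 (g \o f) (dg * df).
Proof.
move=> fdf gdg; split.
  by apply/derivable1_diffP/differentiable_comp; apply/derivable1_diffP.
by rewrite -derive1E derive1_comp // !derive1E !derive_val.
Qed.

End DirectionalDerivatives.

Section NormPowers.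
Variable R : realType.

Lemma cvg_normr_powR0 (a : R) : 0 < a -> `|x| `^ a @[x --> (0 : R)] --> (0 : R).
Proof.
move=> a_gt0; apply/cvgrPdist_lt => e e_gt0.
have ea_gt0 : 0 < e `^ a^-1 by rewrite powR_gt0.
apply: filterS (@pseudometric_normed_Zmodule.nbhs0_lt R R^o _ ea_gt0) => x xe.
rewrite sub0r normrN (ger0_norm (powR_ge0 _ _)).
have := @gt0_ltr_powR _ a a_gt0 `|x| (e `^ a^-1).
rewrite -powRrM mulVf ?gt_eqF // powRr1 ?ltW //.
by apply => //; rewrite nnegrE ?powR_ge0.
Qed.

Lemma continuous_normr_powR (a : R) : 0 < a -> continuous (fun x : R => `|x| `^ a).
Proof.
move=> a_gt0 x; have [->|x_neq0] := eqVneq x 0.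
  by rewrite /continuous_at normr0 powR0 ?gt_eqF //; exact: cvg_normr_powR0.
apply: (@continuous_comp _ _ _ (fun x : R => `|x|) (fun y => y `^ a)).
  exact: norm_continuous.
apply/differentiable_continuous/derivable1_diffP.
by apply: derivable_powR; rewrite in_itv /= andbT normr_gt0.
Qed.

(* [|h|^a] is flat at [0] because [|h|^a / h] has norm [|h|^(a-1)]. *)
Lemma is_derive_normr_powR0 (a : R) : 1 < a ->
  is_derive (0 : R) 1 (fun h : R => `|h| `^ a) 0.
Proof.
move=> a_gt1; apply: cvg_quotient_is_derive.
have a1_gt0 : 0 < a - 1 by rewrite subr_gt0.
have /cvgrPdist_lt small := @cvg_normr_powR0 _ a1_gt0.
apply/cvgrPdist_lt => e e_gt0.
have := nbhs_dnbhs (small e e_gt0); apply: filter_app.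
near=> h => hle.
have h_neq0 : h != 0 by near: h; exact: nbhs_dnbhs_neq.
move: hle; rewrite !sub0r !normrN addr0 normr0 powR0 ?gt_eqF ?(lt_trans ltr01) // subr0.
rewrite -(mulr_powRB1 (normr_ge0 h) (lt_trans ltr01 a_gt1)) /GRing.scale /=.
by rewrite mulrA normrM normrM normfV normr_id mulVf ?normr_eq0 // mul1r.
Unshelve. all: by end_near. Qed.

Lemma is_derive_normr_powR (a c : R) : 1 < a -> 0 <= c ->
  is_derive (0 : R) 1 (fun h : R => `|h + c| `^ a) (a * c `^ (a - 1)).
Proof.
move=> a_gt1; rewrite le_eqVlt => /orP[/eqP <-|c_gt0].
  rewrite powR0 ?subr_eq0 ?gt_eqF // mulr0.
  under eq_fun do rewrite addr0.
  exact: is_derive_normr_powR0.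
have : is_derive (0 : R) 1 ((fun y : R => y `^ a) \o shift c) (a * c `^ (a - 1) * 1).
  apply: is_derive1_comp; first exact: is_derive_shift.
  by rewrite /shift add0r; exact: is_derive1_powR.
rewrite mulr1; apply: near_eq_is_derive.
apply: filterS (@pseudometric_normed_Zmodule.nbhs0_lt R R^o _ c_gt0) => h hc /=.
by rewrite /shift gtr0_norm //; have := ltrNnormlW hc; lra.
Qed.

End NormPowers.

Section NonnegSphere.
Variables (R : realType) (n : nat).

Definition nonneg_sphere (q : R) : set 'rV[R]_n :=
  [set z | (forall i, 0 <= z ord0 i) /\ \sum_(i < n) z ord0 i `^ q = 1].

Lemma nonneg_sphere_dim_gt0 (q : R) (z : 'rV[R]_n) : nonneg_sphere q z -> (0 < n)%N.
Proof.
rewrite lt0n; apply: contraPneq => n0 [_]; move: z.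
by rewrite n0 => z; rewrite big_ord0 => /eqP; rewrite eq_sym oner_eq0.
Qed.

Lemma proj_sum0D (x y : 'rV[R]_n) : proj_sum0 (x + y) = proj_sum0 x + proj_sum0 y.
Proof.
rewrite /proj_sum0 (eq_bigr (fun i => x ord0 i + y ord0 i)) => [|i _]; last by rewrite mxE.
by rewrite big_split /= mulrDl scalerDl opprD addrACA.
Qed.

Lemma proj_sum0Z (a : R) (x : 'rV[R]_n) : proj_sum0 (a *: x) = a *: proj_sum0 x.
Proof.
rewrite /proj_sum0 (eq_bigr (fun i => a * x ord0 i)) => [|i _]; last by rewrite mxE.
by rewrite -mulr_sumr -mulrA -scalerA -scalerBr.
Qed.

Lemma proj_sum0_const (s : R) : (0 < n)%N -> proj_sum0 (const_mx s : 'rV[R]_n) = 0.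
Proof.
move=> n_gt0; rewrite /proj_sum0 (eq_bigr (fun=> s)) => [|i _]; last by rewrite mxE.
rewrite sumr_const card_ord -[s *+ n]mulr_natr mulfK ?pnatr_eq0 -?lt0n //.
by rewrite scalemx_const mulr1 subrr.
Qed.

Lemma nonneg_sphere_shift (q : R) (w : 'rV[R]_n) : (0 < n)%N -> 0 < q ->
  (forall i, 0 <= w ord0 i) -> \sum_(i < n) w ord0 i `^ q <= 1 ->
  exists2 s, 0 <= s & nonneg_sphere q (w + const_mx s).
Proof.
move=> n_gt0 q_gt0 w_ge0 w_le1.
pose f s := \sum_(i < n) `|w ord0 i + s| `^ q.
have f_cont : continuous f.
  apply: (continuous_big add_continuous) => i _ x.
  apply: (@continuous_comp _ _ _ (fun s : R => w ord0 i + s) (fun y => `|y| `^ q)).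
    exact: cvgD (cvg_cst _) cvg_id.
  exact: continuous_normr_powR.
have f0_le1 : f 0 <= 1.
  by rewrite /f; under eq_bigr do rewrite addr0 ger0_norm //.
have f1_ge1 : 1 <= f 1.
  pose i0 := Ordinal n_gt0.
  rewrite /f (bigD1 i0) //=; apply: ler_wpDr; first by rewrite sumr_ge0.
  rewrite ger0_norm ?addr_ge0 //; apply: (le_trans (y := 1 `^ q)); first by rewrite powR1.
  by apply: ge0_ler_powR; rewrite ?nnegrE ?lerDr ?addr_ge0 // ltW.
have f01 : Num.min (f 0) (f 1) <= 1 <= Num.max (f 0) (f 1).
  by rewrite ge_min le_max f0_le1 f1_ge1 orbT.
have [s s01 fs1] := IVT ler01 (continuous_subspaceT f_cont) f01.
have s_ge0 : 0 <= s by move: s01; rewrite in_itv /= => /andP[].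
exists s => //; split => [i|]; first by rewrite !mxE addr_ge0.
rewrite -fs1; apply: eq_bigr => i _.
by rewrite !mxE ger0_norm // addr_ge0.
Qed.

Lemma nonneg_sphere_conv_le1 (q : R) (u v : 'rV[R]_n) (t : {i01 R}) : 1 <= q ->
  nonneg_sphere q u -> nonneg_sphere q v ->
  let w := t%:num *: u + (1 - t%:num) *: v in
  (forall i, 0 <= w ord0 i) /\ \sum_(i < n) w ord0 i `^ q <= 1.
Proof.
move=> q_ge1 [u_ge0 u1] [v_ge0 v1] w.
have wE i : w ord0 i = t%:num * u ord0 i + (1 - t%:num) * v ord0 i by rewrite !mxE.
split => [i|]; first by rewrite wE addr_ge0 // mulr_ge0 // subr_ge0.
apply: (le_trans (y := \sum_(i < n)
  (t%:num * u ord0 i `^ q + (1 - t%:num) * v ord0 i `^ q))).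
  apply: ler_sum => i _; rewrite wE.
  have nonneg (x : R) : 0 <= x -> x \in `[0, +oo[%classic by rewrite inE /= in_itv /= andbT.
  by have := convex_powR q_ge1 t (nonneg _ (u_ge0 i)) (nonneg _ (v_ge0 i)); rewrite !convRE.
by rewrite big_split /= -!mulr_sumr u1 v1 !mulr1 subrKC.
Qed.

Lemma convex_proj_nonneg_sphere (q : R) : 1 <= q ->
  convex_set (@proj_sum0 R n @` nonneg_sphere q).
Proof.
move=> q_ge1 _ _ t /set_mem [u uS <-] /set_mem [v vS <-]; apply/mem_set.
have n_gt0 := nonneg_sphere_dim_gt0 uS.
have [w_ge0 w_le1] := nonneg_sphere_conv_le1 t q_ge1 uS vS.
have [s _ zS] := nonneg_sphere_shift n_gt0 (lt_le_trans ltr01 q_ge1) w_ge0 w_le1.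
exists (t%:num *: u + (1 - t%:num) *: v + const_mx s) => //.
by rewrite proj_sum0D proj_sum0_const // addr0 !proj_sum0D !proj_sum0Z.
Qed.

End NonnegSphere.

Section SphericalScore.
Variables (R : realType) (n : nat) (alpha : R).
Hypothesis alpha_gt1 : 1 < alpha.

Let alpha_neq0 : alpha != 0. Proof. by rewrite gt_eqF // (lt_trans ltr01). Qed.
Let alpha1_neq0 : alpha - 1 != 0. Proof. by rewrite subr_eq0 gt_eqF. Qed.

Lemma derive_spherical_G (p : 'rV[R]_n) (i : 'I_n) :
  0 <= p ord0 i -> 0 < \sum_(k < n) `|p ord0 k| `^ alpha ->
  'D_(delta_mx ord0 i) (spherical_G alpha) p =
  (\sum_(k < n) `|p ord0 k| `^ alpha) `^ (alpha^-1 - 1) * p ord0 i `^ (alpha - 1).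
Proof.
move=> pi_ge0 S_gt0; set S := \sum_(k < n) _ in S_gt0 *.
pose C := \sum_(k < n | k != i) `|p ord0 k| `^ alpha.
pose line := cst C + (fun h : R => `|h + p ord0 i| `^ alpha).
have lineE : (fun h : R => spherical_G alpha (h *: delta_mx ord0 i + p)) =
    (fun s => s `^ alpha^-1) \o line.
  apply/funext => h; rewrite /spherical_G (bigD1 i) //= addrC !mxE !eqxx /= mulr1.
  congr ((_ + _) `^ _); apply: eq_bigr => k ki.
  by rewrite !mxE (negbTE ki) andbF mulr0 add0r.
have line0 : line 0 = S.
  by rewrite /line /S (bigD1 i) //= !fctE add0r addrC.
have : is_derive (0 : R) 1 ((fun s => s `^ alpha^-1) \o line)
    (alpha^-1 * S `^ (alpha^-1 - 1) * (0 + alpha * p ord0 i `^ (alpha - 1))).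
  apply: is_derive1_comp; first exact/is_deriveD/is_derive_normr_powR.
  by rewrite line0; exact: is_derive1_powR.
move=> line_derive; rewrite derive_along_line lineE derive_val.
by rewrite add0r mulrACA mulVf // mul1r.
Qed.

Lemma simplex_sum_powR_gt0 (p : 'rV[R]_n) : simplex p ->
  0 < \sum_(k < n) p ord0 k `^ alpha.
Proof.
move=> [_ p1]; apply: (sumr_gt0_of_support (F := fun k => p ord0 k)).
- by move=> k; exact: powR_ge0.
- by move=> k; exact: powR_eq0_eq0.
- by rewrite p1 oner_neq0.
Qed.

Lemma gradient_spherical_G (p : 'rV[R]_n) : simplex p ->
  gradient (spherical_G alpha) p =
  (\sum_(k < n) p ord0 k `^ alpha) `^ (alpha^-1 - 1) *: \row_i p ord0 i `^ (alpha - 1).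
Proof.
move=> pS; have normE k : `|p ord0 k| = p ord0 k by rewrite ger0_norm //; case: pS.
apply/rowP => i; rewrite !mxE derive_spherical_G; last 2 first.
- by case: pS.
- by under eq_bigr do rewrite normE; exact: simplex_sum_powR_gt0.
by under eq_bigr do rewrite normE.
Qed.

Lemma gradient_spherical_G_nonneg_sphere (p : 'rV[R]_n) : simplex p ->
  nonneg_sphere (alpha / (alpha - 1)) (gradient (spherical_G alpha) p).
Proof.
move=> pS; have [p_ge0 _] := pS; have S_gt0 := simplex_sum_powR_gt0 pS.
rewrite gradient_spherical_G //; set S := \sum_(k < n) _ in S_gt0 *.
split => [i|]; first by rewrite !mxE mulr_ge0 ?powR_ge0.
have expS : (alpha^-1 - 1) * (alpha / (alpha - 1)) = -1.
  by field; rewrite alpha1_neq0 alpha_neq0.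
have expp : (alpha - 1) * (alpha / (alpha - 1)) = alpha.
  by field; rewrite alpha1_neq0.
rewrite -[RHS](mulVf (lt0r_neq0 S_gt0)) /S mulr_sumr; apply: eq_bigr => i _.
by rewrite !mxE powRM ?powR_ge0 // -!powRrM expS expp powRN powRr1 // ltW.
Qed.

Lemma nonneg_sphere_gradient_spherical_G (z : 'rV[R]_n) :
  nonneg_sphere (alpha / (alpha - 1)) z ->
  exists2 p, simplex p & gradient (spherical_G alpha) p = z.
Proof.
move=> [z_ge0 z1].
pose y : 'rV[R]_n := \row_i z ord0 i `^ (alpha - 1)^-1.
have y_ge0 i : 0 <= y ord0 i by rewrite mxE powR_ge0.
pose T := \sum_(i < n) y ord0 i.
have T_gt0 : 0 < T.
  apply: (sumr_gt0_of_support (F := fun i => z ord0 i `^ (alpha / (alpha - 1)))) => //.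
    by move=> i; rewrite mxE => /powR_eq0_eq0 ->; rewrite powR0 // mulf_neq0 ?invr_eq0.
  by rewrite z1 oner_neq0.
pose p := T^-1 *: y.
have p_ge0 i : 0 <= p ord0 i by rewrite mxE mulr_ge0 // invr_ge0 ltW.
have pS : simplex p.
  split => //; under eq_bigr do rewrite mxE.
  by rewrite -mulr_sumr mulVf ?gt_eqF.
have Sp : \sum_(k < n) p ord0 k `^ alpha = T^-1 `^ alpha.
  rewrite -[RHS]mulr1 -z1 mulr_sumr; apply: eq_bigr => k _.
  by rewrite mxE powRM ?y_ge0 ?invr_ge0 ?(ltW T_gt0) // mxE -powRrM [_^-1 * alpha]mulrC.
exists p => //; rewrite gradient_spherical_G // Sp; apply/rowP => i; rewrite !mxE.
have expT : alpha * (alpha^-1 - 1) = - (alpha - 1) by field.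
rewrite powRM ?powR_ge0 ?invr_ge0 ?(ltW T_gt0) // -!powRrM expT powRN mulKf; last first.
  by rewrite lt0r_neq0 // powR_gt0 // invr_gt0.
by rewrite mulVf // powRr1.
Qed.

Lemma exposure_range_spherical_G :
  exposure_range (spherical_G alpha) =
  @proj_sum0 R n @` nonneg_sphere (alpha / (alpha - 1)).
Proof.
apply/seteqP; split => _ [p pS <-].
  exists (gradient (spherical_G alpha) p) => //.
  exact: gradient_spherical_G_nonneg_sphere.
by have [p' p'S <-] := nonneg_sphere_gradient_spherical_G pS; exists p'.
Qed.

End SphericalScore.

Theorem propositionF5 (R : realType) (n : nat) (alpha : R) :
  1 < alpha -> convex_exposure (@spherical_G R n alpha).
Proof.
move=> alpha_gt1; rewrite /convex_exposure exposure_range_spherical_G //.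
by apply: convex_proj_nonneg_sphere; rewrite ler_pdivlMr ?subr_gt0 // mul1r gerBl.
Qed.
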